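(* Let $(A,C,k)$ be an instance and $W$ an affordable committee. Then every CC-completion of $W$ has representation ratio at least $\frac34$.
   Context: An instance $(A,C,k)$ consists of a finite nonempty candidate set $C$, voters $N=\{1,\dots,n\}$, approval sets $A_i\subseteq C$, and a committee size $1\le k\le|C|$. A committee is $W\subseteq C$ with $|W|\le k$. $\mathrm{cov}(W)=|\{i: A_i\cap W\ne\emptyset\}|$; the representation ratio is $\mathrm{cov}(W)/\max\{\mathrm{cov}(W'):|W'|=k\}$. A CC-completion of $W$ is $W\cup T$ with $T\subseteq C\setminus W$, $|T|=k-|W|$, maximizing $\mathrm{cov}(W\cup T)$. $W$ is affordable if there are $p_i:C\to\mathbb{R}_{\ge0}$ ($i\in N$) with $p_i(c)=0$ for $c\notin A_i$, $\sum_c p_i(c)\le k/n$, $\sum_i p_i(c)=1$ for $c\in W$, $\sum_i p_i(c)=0$ for $c\notin W$. *)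

From mathcomp Require Import all_boot all_order all_algebra.
Set Implicit Arguments. Unset Strict Implicit. Unset Printing Implicit Defensive.
Import Order.TTheory GRing.Theory Num.Theory.

Definition cov (C : finType) (n : nat) (A : 'I_n -> {set C}) (W : {set C}) : nat :=
  #|[set i : 'I_n | [exists c in W, c \in A i]]|.

Definition opt_cov (C : finType) (n : nat) (A : 'I_n -> {set C}) (k : nat) : nat :=
  \max_(W' : {set C} | #|W'| == k) cov A W'.

(* W \cup T is a CC-completion of W *)
Definition is_CC_completion (C : finType) (n : nat) (A : 'I_n -> {set C}) (k : nat)
    (W T : {set C}) : Prop :=
  [/\ [disjoint T & W], #|T| = k - #|W| &
      forall T' : {set C}, [disjoint T' & W] -> #|T'| = k - #|W| ->
        cov A (W :|: T') <= cov A (W :|: T)]%N.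

Local Open Scope ring_scope.

Definition affordable (R : realFieldType) (C : finType) (n : nat)
    (A : 'I_n -> {set C}) (k : nat) (W : {set C}) : Prop :=
  exists p : 'I_n -> C -> R,
    [/\ forall i c, 0 <= p i c,
        forall i c, c \notin A i -> p i c = 0,
        forall i, \sum_(c : C) p i c <= k%:R / n%:R,
        forall c, c \in W -> \sum_(i < n) p i c = 1 &
        forall c, c \notin W -> \sum_(i < n) p i c = 0].

From mathcomp Require Import all_boot all_order all_algebra.
From mathcomp Require Import zify.
Set Implicit Arguments. Unset Strict Implicit. Unset Printing Implicit Defensive.
Import Order.TTheory GRing.Theory Num.Theory.

(* Let [Wo] be an optimal committee and write [O = cov Wo], [a = cov W],
   [c = cov (W :|: T)], [w = #|W|].  Affordability gives [a >= w n / k].  Charging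
   each voter covered by [Wo] but not by [W] to one candidate of [Wo :\: W] makes
   marginal coverage additive, so some [k - w] of these (at most [k]) candidates
   already add [(k - w) / k * (O - a)] new voters; as [T] is a best completion,
   [c - a >= (1 - a / n) (O - a)], and since [O <= n] an AM-GM estimate
   yields [c >= 3 O / 4]. *)

Lemma subset_extend (T : finType) (S B : {set T}) m :
  S \subset B -> #|S| <= m <= #|B| ->
  exists X : {set T}, [/\ S \subset X, X \subset B & #|X| = m].
Proof.
move=> SB; elim: m => [|m IH] /andP[Sm mB].
  by exists S; split => //; apply/eqP; rewrite -leqn0.
have [Sm1 | ltSm] := eqVneq #|S| m.+1; first by exists S.
have [X [SX XB cX]] : exists X : {set T}, [/\ S \subset X, X \subset B & #|X| = m].
  by apply: IH; rewrite -ltnS ltn_neqAle ltSm Sm ltnW.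
have /card_gt0P[x] : 0 < #|B :\: X| by rewrite cardsD (setIidPr XB) cX subn_gt0.
rewrite inE => /andP[xX xB].
exists (x |: X); split; first exact: subset_trans SX (subsetUr _ _).
  by rewrite subUset sub1set xB XB.
by rewrite cardsU1 xX cX.
Qed.

(* Induction on [#|D|]: discarding a lightest element never lowers the average weight. *)
Lemma exists_heavy_subset (T : finType) (g : T -> nat) (D : {set T}) s :
  s <= #|D| -> exists2 S : {set T}, S \subset D &
    #|S| = s /\ s * \sum_(d in D) g d <= #|D| * \sum_(d in S) g d.
Proof.
move eN : #|D| => N; elim: N D eN => [|N IH] D eN sN.
  by exists D => //; split; lia.
have [-> | ltsN] := eqVneq s N.+1; first by exists D.
have /card_gt0P[d0 d0D] : 0 < #|D| by rewrite eN.
case: (arg_minnP g d0D) => m mD' mmin; have mD : m \in D := mD'.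
have cDm : #|D :\ m| = N by move: eN; rewrite (cardsD1 m D) mD; lia.
have [|S SD [cS HS]] := IH _ cDm; first by rewrite -ltnS ltn_neqAle ltsN sN.
exists S; first exact: subset_trans SD (subsetDl _ _).
split => //; rewrite (big_setD1 m mD) /=.
have light_m : N * g m <= \sum_(d in D :\ m) g d.
  rewrite -cDm -sum_nat_const; apply: leq_sum => d; rewrite !inE => /andP[_].
  exact: mmin.
nia.
Qed.

Lemma card_preim_oapp (I T : finType) (f : I -> option T) (S : {set T}) :
  #|[set i | oapp (mem S) false (f i)]| = \sum_(d in S) #|[set i | f i == Some d]|.
Proof.
rewrite -sum1_card big_mkcond /=.
under [RHS]eq_bigr do rewrite -sum1_card.
rewrite (exchange_big_dep predT) //=; apply: eq_bigr => i _.
under eq_bigl do rewrite inE.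
rewrite inE; case: (f i) => [d|] /=; last by rewrite big1 // => d /andP[].
have [dS | dNS] := boolP (d \in S).
  by rewrite (big_pred1 d) // => d'; apply/andP/eqP => [[_ /eqP[->]] | ->].
rewrite big_pred0 // => d'; apply/andP => -[d'S /eqP[ed]].
by rewrite ed d'S in dNS.
Qed.

(* With [x = O - a] and [y = c - a], affordability gives [(n - a) x <= n y],
   and [n >= a + x] together with [4 a x <= (a + x)^2] gives [3 x <= a + 4 y]. *)
Lemma three_quarters_bound (k w n a O c : nat) :
  0 < k -> w * n <= a * k -> O <= n -> a <= c ->
  (k - w) * (O - a) <= k * (c - a) -> 3 * O <= 4 * c.
Proof.
move=> k0 wn On ac gain.
have [Oa | aO] := leqP O a; first by lia.
have [x Ox] : exists x, O = a + x by exists (O - a); lia.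
have [y cy] : exists y, c = a + y by exists (c - a); lia.
subst O c; rewrite !addKn in gain.
have rescaled : (n - a) * x <= n * y.
  rewrite -(leq_pmul2l k0).
  have : (k * (n - a)) * x <= ((k - w) * n) * x by apply: leq_mul => //; nia.
  nia.
have amgm : 4 * (a * x) <= (a + x) * (a + x).
  by have [+ _] := nat_AGM2 a x; rewrite expnS expn1.
nia.
Qed.

Section Coverage.
Variables (C : finType) (n : nat) (A : 'I_n -> {set C}).
Implicit Types X Y S Wo : {set C}.

Definition covered X (i : 'I_n) : bool := [exists c in X, c \in A i].

Lemma cov_le_n X : cov A X <= n.
Proof. by apply: leq_trans (max_card _) _; rewrite card_ord. Qed.

Lemma covered_mono X Y i : X \subset Y -> covered X i -> covered Y i.
Proof.
move=> XY /existsP[c /andP[cX cA]].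
by apply/existsP; exists c; rewrite (subsetP XY c cX).
Qed.

Lemma cov_mono X Y : X \subset Y -> cov A X <= cov A Y.
Proof.
move=> XY; apply: subset_leq_card; apply/subsetP => i; rewrite !inE.
exact: covered_mono.
Qed.

Lemma opt_cov_attained k :
  k <= #|C| -> exists2 Wo : {set C}, #|Wo| = k & opt_cov A k = cov A Wo.
Proof.
move=> kC.
have [|P [_ _ cP]] := subset_extend (m := k) (sub0set [set: C]).
  by rewrite cards0 cardsT.
have : 0 < #|[pred X : {set C} | #|X| == k]| by apply/card_gt0P; exists P; rewrite inE /= cP.
by case/(eq_bigmax_cond (cov A)) => Wo /eqP cWo eWo; exists Wo.
Qed.

Section FreshVoters.
Variables W D : {set C}.

Definition fresh_rep (i : 'I_n) : option C :=
  if covered W i then None else [pick d in D :&: A i].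

Definition fresh (S : {set C}) := [set i | oapp (mem S) false (fresh_rep i)].

Lemma cov_fresh S : cov A W + #|fresh S| <= cov A (W :|: S).
Proof.
have disj : [set i | covered W i] :&: fresh S = set0.
  by apply/setP => i; rewrite !inE /fresh_rep; case: (covered W i).
have := cardsUI [set i | covered W i] (fresh S); rewrite disj cards0 addn0 => <-.
apply: subset_leq_card; apply/subsetP => i; rewrite !inE /fresh_rep.
case/orP => [| iS]; first exact/covered_mono/subsetUl.
case: (covered W i) iS => //=; case: pickP => // d; rewrite inE => /andP[_ dA] dS.
by apply/existsP; exists d; rewrite !inE dA andbT; apply/orP; right.
Qed.

Lemma cov_le_fresh Wo : Wo \subset W :|: D -> cov A Wo <= cov A W + #|fresh D|.
Proof.
move=> WoWD; apply: leq_trans (leq_card_setU [set i | covered W i] (fresh D)).1.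
apply: subset_leq_card; apply/subsetP => i; rewrite !inE /fresh_rep.
case/existsP => c /andP[cWo cA]; case: (boolP (covered W i)) => //= iNW.
case: pickP => [d | noD] /=; first by rewrite inE => /andP[].
have cD : c \in D.
  move/subsetP: WoWD => /(_ c cWo); rewrite inE => /orP[cW |] //.
  by case/negP: iNW; apply/existsP; exists c; rewrite cW.
by have := noD c; rewrite !inE cD cA.
Qed.

Lemma exists_gainful_subset Wo k s :
  Wo \subset W :|: D -> #|D| <= k -> s <= k ->
  exists S, [/\ S \subset D, #|S| <= s &
    s * (cov A Wo - cov A W) <= k * (cov A (W :|: S) - cov A W)].
Proof.
move=> WoWD Dk sk.
have gainWo : cov A Wo - cov A W <= #|fresh D| by have := cov_le_fresh WoWD; lia.
have gainS S : #|fresh S| <= cov A (W :|: S) - cov A W by have := cov_fresh S; lia.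
have [sD | Ds] := leqP s #|D|.
  have [S SD [cS heavy]] := exists_heavy_subset
    (fun d => #|[set i | fresh_rep i == Some d]|) sD.
  rewrite -!card_preim_oapp -/(fresh _) -/(fresh _) in heavy.
  exists S; split; [exact: SD | by rewrite cS |].
  apply: leq_trans (leq_mul (leqnn s) gainWo) _.
  apply: leq_trans heavy _.
  exact: leq_mul Dk (gainS S).
exists D; split; [exact: subxx | exact: ltnW |].
exact: leq_mul sk (leq_trans gainWo (gainS D)).
Qed.

End FreshVoters.

End Coverage.

Section Affordability.
Local Open Scope ring_scope.

(* The [#|W|] units paid for [W] come only from voters approving a member of [W],
   each of whom pays at most [k / n]. *)
Lemma affordable_card_le (R : realFieldType) (C : finType) (n : nat)
    (A : 'I_n -> {set C}) (k : nat) (W : {set C}) :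
  (0 < n)%N -> affordable R A k W -> (#|W| * n <= cov A W * k)%N.
Proof.
move=> n0 [p [p0 pA psum pW _]].
set S := [set i : 'I_n | covered A W i].
have n0R : (0 : R) < n%:R by rewrite ltr0n.
suff H : (#|W|%:R : R) <= #|S|%:R * (k%:R / n%:R).
  by rewrite -(ler_nat R) !natrM -ler_pdivlMr // -mulrA.
have -> : (#|W|%:R : R) = \sum_(c in W) \sum_(i < n) p i c.
  by rewrite -sumr_const; apply: eq_bigr => c cW; rewrite pW.
rewrite exchange_big /= (bigID (mem S)) /= [X in _ + X]big1 ?addr0; last first.
  move=> i iS; apply: big1 => c cW; apply: pA; apply: contra iS => cA.
  by rewrite inE; apply/existsP; exists c; rewrite cW.
rewrite mulr_natl -sumr_const; apply: ler_sum => i _.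
apply: le_trans (psum i).
rewrite [X in _ <= X](bigID (mem W)) /= lerDl.
by apply: sumr_ge0 => c _; apply: p0.
Qed.

End Affordability.

Theorem corollary3 (R : realFieldType) (C : finType) (n : nat)
    (A : 'I_n -> {set C}) (k : nat) (W T : {set C}) :
  (0 < n)%N -> (1 <= k)%N -> (k <= #|C|)%N ->
  (#|W| <= k)%N ->
  affordable R A k W ->
  is_CC_completion A k W T ->
  (3 * opt_cov A k <= 4 * cov A (W :|: T))%N.
Proof.
move=> n0 k1 kC _ aff [_ _ T_best].
have [Wo cWo ->] := opt_cov_attained A kC.
set D := Wo :\: W.
have WoWD : Wo \subset W :|: D.
  by apply/subsetP => c cinWo; rewrite !inE cinWo andbT orbN.
have Dk : #|D| <= k by rewrite -cWo subset_leq_card // subsetDl.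
have [S [SD cS gain]] := exists_gainful_subset A WoWD Dk (leq_subr #|W| k).
have SW : S \subset ~: W.
  by apply: subset_trans SD _; apply/subsetP => c; rewrite !inE => /andP[].
have [|T' [ST' T'W cT']] := subset_extend (m := k - #|W|) SW.
  by rewrite cS /=; have := cardsC W; lia.
have cov_S_T : cov A (W :|: S) <= cov A (W :|: T).
  apply: leq_trans (cov_mono A (setUS W ST')) (T_best T' _ cT').
  by rewrite disjoints_subset.
apply: (three_quarters_bound k1 (affordable_card_le n0 aff) (cov_le_n A Wo)).
  exact/cov_mono/subsetUl.
exact: leq_trans gain (leq_mul (leqnn k) (leq_sub2r _ cov_S_T)).
Qed.
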